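(* Let $p$ be a prime and $k>1$, $n>1$ natural numbers. Let $\mathcal{G}$ be a linear cellular automaton over $(\mathbb{Z}/p^k\mathbb{Z})^n$ with associated matrix $B\in(\mathbb{Z}/p^k\mathbb{Z}[X,X^{-1}])^{n\times n}$, and let $\mathcal{F}$ be the linear cellular automaton over $(\mathbb{Z}/p\mathbb{Z})^n$ whose associated matrix is $A=B\bmod p\in(\mathbb{Z}/p\mathbb{Z}[X,X^{-1}])^{n\times n}$ (all coefficients reduced modulo $p$). Then $\mathcal{G}$ is positively expansive if and only if $\mathcal{F}$ is positively expansive. Equivalently, $\mathcal{G}$ is positively expansive if and only if the matrix $B\bmod p$ is expansive.
   Context: For a natural $m>1$, write $\mathbb{L}_m=\mathbb{Z}/m\mathbb{Z}[X,X^{-1}]$. A linear cellular automaton (LCA) over $(\mathbb{Z}/m\mathbb{Z})^n$ is a map $\mathcal{F}$ on $((\mathbb{Z}/m\mathbb{Z})^n)^{\mathbb{Z}}$ given, for some $r\in\mathbb{N}$ and matrices $A_{-r},\dots,A_r\in(\mathbb{Z}/m\mathbb{Z})^{n\times n}$, by $\mathcal{F}(c)_i=\sum_{j=-r}^{r}A_jc_{i+j}$; its associated matrix is $\sum_{j=-r}^rA_jX^{-j}\in\mathbb{L}_m^{n\times n}$. The configuration space carries the metric $d(c,c')=2^{-\min\{|j|:c_j\neq c'_j\}}$ ($d(c,c)=0$). $\mathcal{F}$ is positively expansive if there is $\varepsilon>0$ such that for all configurations $c\neq c'$ there is $\ell\in\mathbb{N}$ with $d(\mathcal{F}^\ell(c),\mathcal{F}^\ell(c'))\geq\varepsilon$.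 For nonzero $\alpha\in\mathbb{L}_m$, $\deg^+(\alpha)$ (resp. $\deg^-(\alpha)$) is the largest (resp. smallest) exponent with nonzero coefficient; $\deg^+(0)=-\infty$, $\deg^-(0)=+\infty$. A monic polynomial $\alpha_0+\alpha_1t+\dots+\alpha_{n-1}t^{n-1}+t^n\in\mathbb{L}_m[t]$ is expansive if $\alpha_0\neq0$, $\deg^+(\alpha_0)>0$, $\deg^+(\alpha_0)>\deg^+(\alpha_i)$ for all $1\le i\le n-1$, $\deg^-(\alpha_0)<0$, and $\deg^-(\alpha_0)<\deg^-(\alpha_i)$ for all $1\le i\le n-1$. A matrix $A\in\mathbb{L}_m^{n\times n}$ is expansive if $\det(tI_n-A)$ is expansive. *)

From mathcomp Require Import all_boot all_order all_algebra.
From Stdlib Require Import ClassicalEpsilon.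
Set Implicit Arguments. Unset Strict Implicit. Unset Printing Implicit Defensive.
Import Order.TTheory GRing.Theory Num.Theory.
Local Open Scope ring_scope.

Definition config (m n : nat) := int -> 'cV['Z_m]_n.

(* Its associated matrix is sum_j A_j X^{-j}; values of A outside [-r,r]
   play no role. *)
Definition lca (m n r : nat) (A : int -> 'M['Z_m]_n) (c : config m n)
  : config m n :=
  fun i => \sum_(j < (2 * r).+1)
             A (j%:Z - r%:Z) *m c (i + (j%:Z - r%:Z)).

Definition redmx (p k n : nat) (A : 'M['Z_(p ^ k)]_n) : 'M['Z_p]_n :=
  map_mx (fun x : 'Z_(p ^ k) => (nat_of_ord x)%:R) A.

Definition diff_at (m n : nat) (c c' : config m n) (d : nat) : bool :=
  (c d%:Z != c' d%:Z) || (c (- d%:Z) != c' (- d%:Z)).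

Definition cdist (m n : nat) (c c' : config m n) : rat :=
  match excluded_middle_informative (exists d, diff_at c c' d) with
  | left H => (2%:R : rat) ^- (ex_minn H)
  | right _ => 0
  end.

Definition pos_expansive (m n : nat) (F : config m n -> config m n) : Prop :=
  exists eps : rat, 0 < eps /\
    forall c c' : config m n, c <> c' ->
      exists l : nat, eps <= cdist (iter l F c) (iter l F c').

(* Multiplication by p^(k-1) embeds Z/p into Z/p^k as its p-torsion, and on
   configurations with values in this copy of Z/p the matrix B acts through
   B mod p, so G restricted to them is F.  Since the metric only records where
   two configurations differ, G-orbits of embedded configurations separate
   exactly as the F-orbits do: this gives F expansive from G expansive.
   Conversely, G is additive, so it suffices to separate a nonzero difference
   e from 0; some multiple p^s e is nonzero and killed by p, hence embedded,
   and multiplying by p^s can only bring a configuration closer to 0. *)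

From HB Require Import structures.
From mathcomp Require Import all_boot all_order all_algebra.
From mathcomp Require Import boolp functions.
From Stdlib Require Import ClassicalEpsilon.
Set Implicit Arguments. Unset Strict Implicit. Unset Printing Implicit Defensive.
Import Order.TTheory GRing.Theory Num.Theory.
Local Open Scope ring_scope.

Lemma le_cdist (m n m' n' : nat) (x w : config m n) (y z : config m' n') :
  (forall d, diff_at y z d -> diff_at x w d) -> cdist y z <= cdist x w.
Proof.
move=> sub_diff; rewrite /cdist.
case: excluded_middle_informative => [yz|no_yz];
  case: excluded_middle_informative => [xw|no_xw] //.
- case: ex_minnP => a yz_a _; case: ex_minnP => b _ min_b.
  have le_ba : (b <= a)%N by apply/min_b/sub_diff.
  by rewrite lef_pV2 ?posrE ?exprn_gt0 // ler_eXn2l.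
- by case: no_xw; case: yz => d /sub_diff; exists d.
- by rewrite invr_ge0 exprn_ge0.
Qed.

Lemma eq_cdist (m n m' n' : nat) (x w : config m n) (y z : config m' n') :
  (forall d, diff_at y z d = diff_at x w d) -> cdist y z = cdist x w.
Proof.
by move=> eq_diff; apply/le_anti; rewrite !le_cdist // => d; rewrite eq_diff.
Qed.

Section ConfigGroup.
Variables m n : nat.
Implicit Types c e : config m n.

Lemma cdist_subr c c' : cdist c c' = cdist (c - c') 0.
Proof. by apply: eq_cdist => d; rewrite /diff_at !subr_eq0. Qed.

Lemma cdist_mulrn_le e t : cdist (e *+ t) 0 <= cdist e 0.
Proof.
apply: le_cdist => d; rewrite /diff_at natmulfctE.
apply: contraLR; rewrite negb_or !negbK => /andP[/eqP-> /eqP->].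
by rewrite !mul0rn eqxx.
Qed.

Lemma config_mulrn_modulus e : (1 < m)%N -> e *+ m = 0.
Proof.
move=> m_gt1; apply/funext => i; apply/matrixP => a b.
by rewrite natmulfctE mulmxnE -mulr_natr pchar_Zp // mulr0 !mxE.
Qed.

Lemma lca_is_zmod_morphism r A : zmod_morphism (@lca m n r A).
Proof.
move=> c c'; apply/funext => i; rewrite /lca !fctE /= -sumrB.
by apply: eq_bigr => j _; rewrite mulmxBr.
Qed.

HB.instance Definition _ r A :=
  GRing.isZmodMorphism.Build (config m n) (config m n) (lca r A)
    (lca_is_zmod_morphism r A).

End ConfigGroup.

Lemma iter_is_zmod_morphism (V : zmodType) (f : {additive V -> V}) l :
  zmod_morphism (iter l f).
Proof. by elim: l => [|l IHl] x y //=; rewrite IHl raddfB. Qed.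

HB.instance Definition _ (V : zmodType) (f : {additive V -> V}) l :=
  GRing.isZmodMorphism.Build V V (iter l f) (iter_is_zmod_morphism f l).

Lemma inj_map_mx (R S : Type) (f : R -> S) m n :
  injective f -> injective (map_mx f : 'M_(m, n) -> 'M_(m, n)).
Proof.
move=> f_inj A A' /matrixP eq_AA'; apply/matrixP => i j.
by apply: f_inj; have := eq_AA' i j; rewrite !mxE.
Qed.

Lemma exists_torsion_multiple (V : zmodType) (p t : nat) (x : V) :
  x != 0 -> x *+ p ^ t = 0 -> exists s, x *+ p ^ s != 0 /\ x *+ p ^ s *+ p = 0.
Proof.
move=> x_neq0; elim: t => [|t IHt].
  by rewrite expn0 mulr1n => /eqP; rewrite (negPf x_neq0).
have [/IHt//|nz_t] := eqVneq (x *+ p ^ t) 0.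
by rewrite expnSr mulrnA => tors; exists t.
Qed.

Lemma prime_expn_gt1 p k : prime p -> (0 < k)%N -> (1 < p ^ k)%N.
Proof. by move=> p_pr k_gt0; rewrite -{1}(expn0 p) ltn_exp2l ?prime_gt1. Qed.

Section TopDigit.
Variables p k : nat.
Hypotheses (p_pr : prime p) (k_gt0 : (0 < k)%N).

Let p_gt0 : (0 < p)%N := prime_gt0 p_pr.

Let pk_gt1 : (1 < p ^ k)%N := prime_expn_gt1 p_pr k_gt0.

Let pk_eq : (p ^ k = p * p ^ k.-1)%N.
Proof. by rewrite -expnS prednK. Qed.

Definition top_embed (y : 'Z_p) : 'Z_(p ^ k) := (p ^ k.-1 * y)%:R.

Definition top_digit (x : 'Z_(p ^ k)) : 'Z_p := (x %/ p ^ k.-1)%:R.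

Lemma top_embed_natr a : top_embed a%:R = (p ^ k.-1 * a)%:R.
Proof.
rewrite /top_embed val_Zp_nat ?prime_gt1 // {2}(divn_eq a p) mulnDr natrD.
rewrite mulnA [(_ * _ * p)%N]mulnAC -expnSr prednK //.
by rewrite (natrM _ (p ^ k)) pchar_Zp // mul0r add0r.
Qed.

Lemma top_embed0 : top_embed 0 = 0.
Proof. by rewrite /top_embed muln0. Qed.

Lemma top_embedD y z : top_embed (y + z) = top_embed y + top_embed z.
Proof.
have -> : y + z = (y + z : nat)%:R by rewrite natrD !natr_Zp.
by rewrite top_embed_natr mulnDr natrD.
Qed.

Lemma top_embed_mulr (x : 'Z_(p ^ k)) y :
  top_embed ((x : nat)%:R * y) = x * top_embed y.
Proof.
by rewrite -[y in LHS]natr_Zp -natrM top_embed_natr -[x in RHS]natr_Zp -natrM mulnCA.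
Qed.

Lemma top_embed_inj : injective top_embed.
Proof.
move=> y z /(congr1 (@nat_of_ord _)); rewrite !val_Zp_nat //.
have top_lt (w : 'Z_p) : (p ^ k.-1 * w < p ^ k)%N.
  rewrite pk_eq mulnC ltn_pmul2r ?expn_gt0 ?p_gt0 //.
  by rewrite -[p in (_ < p)%N]Zp_cast ?prime_gt1.
rewrite !modn_small // => /eqP.
by rewrite eqn_pmul2l ?expn_gt0 ?p_gt0 // => /eqP/val_inj.
Qed.

Lemma top_digitK x : x *+ p = 0 -> top_embed (top_digit x) = x.
Proof.
move=> /(congr1 (@nat_of_ord _)).
rewrite -mulr_natl -[x in LHS]natr_Zp -natrM val_Zp_nat // => /eqP pk_dvd.
have : (p * p ^ k.-1 %| p * x)%N by rewrite -pk_eq.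
rewrite dvdn_pmul2l // => top_dvd.
by rewrite top_embed_natr mulnC divnK // natr_Zp.
Qed.

End TopDigit.

Arguments top_embed : clear implicits.
Arguments top_digit : clear implicits.

Section EmbedConfig.
Variables p k n : nat.
Hypotheses (p_pr : prime p) (k_gt0 : (0 < k)%N).

Definition embed_config (c : config p n) : config (p ^ k) n :=
  fun i => map_mx (top_embed p k) (c i).

Definition top_digit_config (e : config (p ^ k) n) : config p n :=
  fun i => map_mx (top_digit p k) (e i).

Lemma diff_at_embed c c' d :
  diff_at (embed_config c) (embed_config c') d = diff_at c c' d.
Proof. by rewrite /diff_at !(inj_eq (inj_map_mx (top_embed_inj p_pr k_gt0))). Qed.

Lemma cdist_embed c c' : cdist (embed_config c) (embed_config c') = cdist c c'.
Proof. exact/eq_cdist/diff_at_embed. Qed.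

Lemma embed_config_inj : injective embed_config.
Proof.
move=> c c' eq_cc'; apply/funext => i.
apply: (inj_map_mx (top_embed_inj p_pr k_gt0)).
exact: (congr1 (fun e => e i) eq_cc').
Qed.

Lemma embed_config0 : embed_config 0 = 0.
Proof. by apply/funext => i; apply/matrixP => a b; rewrite !mxE top_embed0. Qed.

Lemma top_digit_configK e : e *+ p = 0 -> embed_config (top_digit_config e) = e.
Proof.
move=> tors; apply/funext => i; apply/matrixP => a b; rewrite !mxE top_digitK //.
have := congr1 (fun f : config (p ^ k) n => f i a b) tors.
by rewrite natmulfctE mulmxnE mxE.
Qed.

Lemma map_top_embed_mulmx (M : 'M['Z_(p ^ k)]_n) (v : 'cV['Z_p]_n) :
  map_mx (top_embed p k) (redmx M *m v) = M *m map_mx (top_embed p k) v.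
Proof.
apply/matrixP => a b.
rewrite !mxE (big_morph _ (top_embedD p_pr k_gt0) (top_embed0 p k)).
by apply: eq_bigr => j _; rewrite !mxE /= top_embed_mulr.
Qed.

Lemma lca_embed r (B : int -> 'M['Z_(p ^ k)]_n) c :
  lca r B (embed_config c) = embed_config (lca r (fun j => redmx (B j)) c).
Proof.
apply/funext => i; apply/matrixP => a b.
rewrite /lca /embed_config mxE !summxE.
rewrite (big_morph _ (top_embedD p_pr k_gt0) (top_embed0 p k)).
by apply: eq_bigr => j _; rewrite -map_top_embed_mulmx mxE.
Qed.

Lemma iter_lca_embed r (B : int -> 'M['Z_(p ^ k)]_n) l c :
  iter l (lca r B) (embed_config c) =
  embed_config (iter l (lca r (fun j => redmx (B j))) c).
Proof. by elim: l => //= l ->; rewrite lca_embed. Qed.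

End EmbedConfig.

Arguments embed_config {p} k {n} c.
Arguments top_digit_config p k {n} e.

Lemma lca_expansive_on_torsion p k n r (B : int -> 'M['Z_(p ^ k)]_n) (eps : rat) :
  prime p -> (0 < k)%N ->
  (forall c c' : config p n, c <> c' -> exists l,
     eps <= cdist (iter l (lca r (fun j => redmx (B j))) c)
                  (iter l (lca r (fun j => redmx (B j))) c')) ->
  forall e : config (p ^ k) n, e != 0 -> e *+ p = 0 ->
  exists l, eps <= cdist (iter l (lca r B) e) 0.
Proof.
move=> p_pr k_gt0 expF e e_neq0 e_tors.
have embed_digit := top_digit_configK p_pr k_gt0 e_tors.
have digit_neq0 : top_digit_config p k e <> 0.
  by move=> digit0; move: e_neq0; rewrite -embed_digit digit0 embed_config0 eqxx.
have [l le_eps] := expF _ _ digit_neq0; exists l.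
move: le_eps; rewrite -(cdist_embed p_pr k_gt0) -!(iter_lca_embed p_pr k_gt0).
by rewrite embed_digit embed_config0 raddf0.
Qed.

Theorem lemma4 (p k n r : nat) (hp : prime p) (hk : (1 < k)%N) (hn : (1 < n)%N)
  (B : int -> 'M['Z_(p ^ k)]_n) :
  pos_expansive (lca r B) <-> pos_expansive (lca r (fun j => redmx (B j))).
Proof.
have k_gt0 : (0 < k)%N := ltnW hk.
split=> -[eps [eps_gt0 expans]]; exists eps; split=> // c c' neq_cc'.
- have /expans[l] : embed_config k c <> embed_config k c'.
    by move/(embed_config_inj hp k_gt0).
  by rewrite !iter_lca_embed // cdist_embed //; exists l.
- have e_neq0 : c - c' != 0 by rewrite subr_eq0; apply/eqP.
  have e_killed := config_mulrn_modulus (c - c') (prime_expn_gt1 hp k_gt0).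
  have [s [es_neq0 es_tors]] := exists_torsion_multiple e_neq0 e_killed.
  have [l le_eps] := lca_expansive_on_torsion hp k_gt0 expans es_neq0 es_tors.
  exists l; apply: le_trans le_eps _.
  by rewrite [in X in _ <= X]cdist_subr -raddfB raddfMn cdist_mulrn_le.
Qed.
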